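(* Consider the discounted Markov decision process and its optimal policy $\pi^*$ described in the context. For every traffic type $s\in\mathcal{S}$ there exists an integer $K_{th}(s)$ such that for all $k\in\{0,1,\dots,K\}$, $$\pi^*(s,k)=\begin{cases}0,& k<K_{th}(s),\\ 1,& k\ge K_{th}(s).\end{cases}$$
   Context: Let $\mathcal{S}=\{s_0,s_1,\dots,s_N\}$ be a finite set of traffic types, $s_0$ denoting the idle state, with probabilities $p(s)\in(0,1)$, $\sum_{s}p(s)=1$ (types in successive slots i.i.d.). Non-idle types have benefits $0<b_{s_1}<\dots<b_{s_N}$. Fix an integer $K\ge1$, a cost $c>0$, $p,q\in(0,1)$ and $\beta\in(0,1)$. States are $(s,k)$, $s\in\mathcal{S}$, $k\in\{0,\dots,K\}$; actions $a\in\{0,1\}$ (for $s\ne s_0$: $0$ = cellular mode, $1$ = D2D mode; for $s=s_0$: $0$ = accept D2D requests, $1$ = refuse). Transition probabilities $P\{(s',k')\mid(s,k),a\}$: for $s\ne s_0,k>0$: $p(s')\{(1-a)+a(1-q)\}$ if $k'=k$, $p(s')qa$ if $k'=k-1$; for $s\ne s_0,k=0$: $p(s')$ if $k'=0$; for $s=s_0,k<K$: $p(s')\{a+(1-a)(1-p)\}$ if $k'=k$, $p(s')p(1-a)$ if $k'=k+1$; for $s=s_0,k=K$: $p(s')$ if $k'=K$; otherwise $0$. Expected rewards: $\mu(s_0,k,a)=-cp(1-a)$; for $s\ne s_0$, $\mu(s,k,a)=q\,a\,b_s\,I(k>0)$. $V^*$ is the optimal discounted value function, the unique solution of $V^*(s,k)=\max_{a\in\{0,1\}}\{\mu(s,k,a)+\beta\sum_{(s',k')}P\{(s',k')\mid(s,k),a\}V^*(s',k')\}$.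 The optimal policy $\pi^*$: $\pi^*(s,0)=0$ for $s\ne s_0$, $\pi^*(s_0,K)=1$, and in every other state $\pi^*(s,k)=0$ if action $0$ attains the maximum in this Bellman equation and $\pi^*(s,k)=1$ otherwise. *)

From HB Require Import structures.
From mathcomp Require Import all_boot all_order all_algebra.
From mathcomp Require Import reals.
Set Implicit Arguments. Unset Strict Implicit. Unset Printing Implicit Defensive.
Import Order.TTheory GRing.Theory Num.Theory.
Local Open Scope ring_scope.

(* Traffic types s_0,...,s_N are 'I_N.+1, with s_0 (value 0) the idle state.
   Counters k in {0,...,K} are 'I_K.+1.
   Actions a in {0,1} are booleans: false = 0, true = 1 (a%:R as a real). *)

Definition idle (N : nat) (s : 'I_N.+1) : bool := (val s == 0%N).

Definition trans (R : realType) (N K : nat) (ps : 'I_N.+1 -> R) (p q : R)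
  (s : 'I_N.+1) (k : 'I_K.+1) (a : bool) (s' : 'I_N.+1) (k' : 'I_K.+1) : R :=
  let ar : R := a%:R in
  if ~~ idle s then
    (if (0 < val k)%N then
       (if val k' == val k then ps s' * ((1 - ar) + ar * (1 - q))
        else if val k' == (val k).-1 then ps s' * q * ar
        else 0)
     else (if val k' == 0%N then ps s' else 0))
  else
    (if (val k < K)%N then
       (if val k' == val k then ps s' * (ar + (1 - ar) * (1 - p))
        else if val k' == (val k).+1 then ps s' * p * (1 - ar)
        else 0)
     else (if val k' == K then ps s' else 0)).

Definition reward (R : realType) (N K : nat) (b : 'I_N.+1 -> R) (c p q : R)
  (s : 'I_N.+1) (k : 'I_K.+1) (a : bool) : R :=
  let ar : R := a%:R in
  if idle s then - c * p * (1 - ar)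
  else q * ar * b s * (if (0 < val k)%N then 1 else 0).

Definition Qval (R : realType) (N K : nat) (ps : 'I_N.+1 -> R)
  (b : 'I_N.+1 -> R) (c p q beta : R) (V : 'I_N.+1 -> 'I_K.+1 -> R)
  (s : 'I_N.+1) (k : 'I_K.+1) (a : bool) : R :=
  @reward R N K b c p q s k a +
  beta * \sum_(s' : 'I_N.+1) \sum_(k' : 'I_K.+1) @trans R N K ps p q s k a s' k' * V s' k'.

Definition bellman (R : realType) (N K : nat) (ps : 'I_N.+1 -> R)
  (b : 'I_N.+1 -> R) (c p q beta : R) (V : 'I_N.+1 -> 'I_K.+1 -> R) : Prop :=
  forall s k, V s k = Num.max (Qval ps b c p q beta V s k false)
                              (Qval ps b c p q beta V s k true).

Definition pistar (R : realType) (N K : nat) (ps : 'I_N.+1 -> R)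
  (b : 'I_N.+1 -> R) (c p q beta : R) (V : 'I_N.+1 -> 'I_K.+1 -> R)
  (s : 'I_N.+1) (k : 'I_K.+1) : bool :=
  if ~~ idle s && (val k == 0%N) then false
  else if idle s && (val k == K) then true
  else Qval ps b c p q beta V s k true > Qval ps b c p q beta V s k false.

From HB Require Import structures.
From mathcomp Require Import all_boot all_order all_algebra.
From mathcomp Require Import reals topology normedtype sequences.
From mathcomp Require Import ring lra.
Set Implicit Arguments. Unset Strict Implicit. Unset Printing Implicit Defensive.
Import Order.TTheory GRing.Theory Num.Theory.
Local Open Scope ring_scope.

(* The next traffic type is drawn independently of the current state and
   action, so every Q-value depends on V only through the averaged level values
   W k = \sum_s' p(s') V(s', k).  In an idle slot refusing beats accepting iff
   beta (W (k+1) - W k) < c, and in a busy slot D2D beats cellular mode iff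
   beta (W k - W (k-1)) < b_s; so thresholds exist as soon as W has
   nonincreasing increments on {0..K}.  W is a fixed point of the averaged
   Bellman operator, a beta-contraction that preserves concavity, so W is the
   uniform limit of concave value iterates and is itself concave. *)

Lemma le0_of_geometric_bound (R : realType) (e z x : R) :
  0 <= z < 1 -> (forall n, x <= e * z ^+ n) -> x <= 0.
Proof.
move=> /andP[z_ge0 z_lt1] x_le.
have := @cvg_geometric R e z; rewrite ger0_norm // => /(_ z_lt1) cvg0.
apply: (cvgr_to_ge cvg0); exact: nearW.
Qed.

Lemma upclosed_threshold (K : nat) (P : nat -> bool) :
  (forall i j, (i <= j <= K)%N -> P i -> P j) ->
  exists Kth : int, forall k, (k <= K)%N -> P k = (Kth <= k%:Z).
Proof.
move=> P_up; set s := iota 0 K.+1.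
exists (find P s)%:Z => k le_kK; rewrite lez_nat.
have nth_s j : (j <= K)%N -> nth 0%N s j = j by move=> ?; rewrite nth_iota.
case: leqP => [le_fk | lt_kf]; last by rewrite -(nth_s k) // before_find.
have has_s : has P s by rewrite has_find size_iota (leq_ltn_trans le_fk).
have le_fK := leq_trans le_fk le_kK.
by apply: (P_up (find P s)); rewrite ?le_fk // -(nth_s _ le_fK) nth_find.
Qed.

Lemma norm_maxB_le (R : realDomainType) (x y x' y' e : R) :
  `|x - x'| <= e -> `|y - y'| <= e -> `|Num.max x y - Num.max x' y'| <= e.
Proof.
rewrite !ler_norml => /andP[? ?] /andP[? ?].
by rewrite !maxEle; case: ifP => ?; case: ifP => ?; apply/andP; split; lra.
Qed.

Lemma norm_convex_comb_le (R : realDomainType) (t x y e : R) :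
  0 <= t <= 1 -> `|x| <= e -> `|y| <= e -> `|(1 - t) * x + t * y| <= e.
Proof.
move=> /andP[t_ge0 t_le1] x_le y_le.
have t'_ge0 : 0 <= 1 - t by rewrite subr_ge0.
apply: le_trans (ler_normD _ _) _.
rewrite !normrM (ger0_norm t_ge0) (ger0_norm t'_ge0).
have -> : e = (1 - t) * e + t * e by rewrite -mulrDl subrK mul1r.
by apply: lerD; apply: ler_wpM2l.
Qed.

Lemma max0B_bounds (R : realDomainType) (u v : R) :
  u <= v -> 0 <= Num.max 0 v - Num.max 0 u <= v - u.
Proof.
by move=> le_uv; rewrite !maxEle; case: ifP => ?; case: ifP => ?; apply/andP; split; lra.
Qed.

Lemma maxr_shift (R : realDomainType) (x y : R) : Num.max x y = x + Num.max 0 (y - x).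
Proof. by rewrite addrC addr_maxl add0r subrK. Qed.

Lemma sum_ord_delta (R : pzSemiRingType) (K : nat) (F : 'I_K.+1 -> R) (A : R) (i : nat) :
  (i <= K)%N -> \sum_(k < K.+1) (if val k == i then A else 0) * F k = A * F (inord i).
Proof.
move=> le_iK; rewrite (bigD1 (inord i)) //= inordK // eqxx big1 ?addr0 // => k.
by have [<- | _] := eqVneq (val k) i; rewrite ?inord_val ?eqxx ?mul0r.
Qed.

Lemma sum_ord_two_point (R : pzSemiRingType) (K : nat) (F : 'I_K.+1 -> R)
    (A B : R) (i j : nat) :
  (i <= K)%N -> (j <= K)%N -> (B != 0 -> j != i) ->
  \sum_(k < K.+1) (if val k == i then A else if val k == j then B else 0) * F k
  = A * F (inord i) + B * F (inord j).
Proof.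
move=> le_iK le_jK ne_ji.
have [-> | /ne_ji {}ne_ji] := eqVneq B 0.
  rewrite mul0r addr0 -sum_ord_delta //.
  by apply: eq_bigr => k _; case: ifP => //; case: ifP.
rewrite -!sum_ord_delta // -big_split /=; apply: eq_bigr => k _.
case: eqP => [ki | _]; case: eqP => [kj | _]; rewrite ?mul0r ?add0r ?addr0 //.
by move: ne_ji; rewrite -ki -kj eqxx.
Qed.

Definition incr (R : zmodType) (W : nat -> R) (k : nat) : R := W k - W k.-1.

Definition concave_on (R : numDomainType) (K : nat) (W : nat -> R) : Prop :=
  forall k, (0 < k < K)%N -> incr W k.+1 <= incr W k.

Lemma concave_incr_le (R : numDomainType) (K : nat) (W : nat -> R) :
  concave_on K W -> forall i j, (0 < i)%N -> (i <= j <= K)%N -> incr W j <= incr W i.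
Proof.
move=> W_cc i j i_gt0; elim: j => [|j IH] /andP[le_ij le_jK].
  by case: i i_gt0 le_ij.
case: (ltngtP i j.+1) le_ij => // [lt_ij | ->] _ //.
apply: le_trans (W_cc j _) (IH _); first by rewrite (leq_trans i_gt0).
by rewrite -ltnS lt_ij ltnW.
Qed.

Lemma concave_on_of_approx (R : realType) (K : nat) (W : nat -> R)
    (U : nat -> nat -> R) (e z : R) :
  0 <= z < 1 -> (forall n, concave_on K (U n)) ->
  (forall n j, (j <= K)%N -> `|W j - U n j| <= e * z ^+ n) ->
  concave_on K W.
Proof.
move=> z01 U_cc W_U k /andP[k_gt0 lt_kK]; rewrite -subr_ge0 -oppr_le0.
apply: (le0_of_geometric_bound (e := 4 * e) z01) => n.
have := U_cc n k; rewrite k_gt0 lt_kK => /(_ isT).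
have := W_U n k.+1 lt_kK; have := W_U n k (ltnW lt_kK).
have := W_U n k.-1 (leq_trans (leq_pred k) (ltnW lt_kK)).
rewrite /incr -mulrA; set t := e * z ^+ n; rewrite !ler_norml; lra.
Qed.

Section D2DModel.

Variables (R : realType) (N K : nat) (ps b : 'I_N.+1 -> R) (c p q beta : R).

Definition stage_reward (s : 'I_N.+1) (k : nat) (a : bool) : R :=
  if idle s then (if a then 0 else - (c * p))
  else if a && (0 < k)%N then q * b s else 0.

Definition move_prob (s : 'I_N.+1) (k : nat) (a : bool) : R :=
  if idle s then (if a || (K <= k)%N then 0 else p)
  else if a && (0 < k)%N then q else 0.

(* The cap at K only matters for an idle slot with k = K, where move_prob is 0;
   it keeps next_level within {0..K}. *)
Definition next_level (s : 'I_N.+1) (k : nat) : nat :=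
  if idle s then minn k.+1 K else k.-1.

Definition next_value (W : nat -> R) (s : 'I_N.+1) (k : nat) (a : bool) : R :=
  (1 - move_prob s k a) * W k + move_prob s k a * W (next_level s k).

Definition qvalue (W : nat -> R) (s : 'I_N.+1) (k : nat) (a : bool) : R :=
  stage_reward s k a + beta * next_value W s k a.

Definition best_value (W : nat -> R) (s : 'I_N.+1) (k : nat) : R :=
  Num.max (qvalue W s k false) (qvalue W s k true).

(* Action [idle s] (refuse when idle, cellular mode when busy) never changes
   the level; [advantage] is the gain of the other action over it. *)
Definition advantage (W : nat -> R) (s : 'I_N.+1) (k : nat) : R :=
  qvalue W s k (~~ idle s) - qvalue W s k (idle s).

Definition level_value (V : 'I_N.+1 -> 'I_K.+1 -> R) (k : nat) : R :=
  \sum_s ps s * V s (inord k).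

Definition bellman_avg (W : nat -> R) (k : nat) : R :=
  \sum_s ps s * best_value W s k.

Lemma reward_stage (s : 'I_N.+1) (k : 'I_K.+1) (a : bool) :
  reward b c p q s k a = stage_reward s (val k) a.
Proof.
by rewrite /reward /stage_reward; case: a; case: (idle s); case: (0 < val k)%N => /=; ring.
Qed.

Lemma trans_move (s : 'I_N.+1) (k : 'I_K.+1) (a : bool) (s' : 'I_N.+1) (k' : 'I_K.+1) :
  trans ps p q s k a s' k' = ps s' *
    (if val k' == val k then 1 - move_prob s (val k) a
     else if val k' == next_level s (val k) then move_prob s (val k) a else 0).
Proof.
have le_kK := leq_ord k.
rewrite /trans /move_prob /next_level; case: (idle s) => /=.
- case: ltnP => [lt_kK | le_Kk].
  + rewrite (minn_idPl lt_kK) orbF.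
    by case: a => /=; repeat case: ifP => _; ring.
  + have -> : val k = K by apply/eqP; rewrite eqn_leq le_kK.
    by rewrite orbT; repeat case: ifP => _; ring.
- case: (posnP (val k)) => [-> | k_gt0] /=.
  + by rewrite andbF; repeat case: ifP => _; ring.
  + by rewrite andbT; case: a => /=; repeat case: ifP => _; ring.
Qed.

Lemma next_level_le (s : 'I_N.+1) (k : nat) :
  (k <= K)%N -> (next_level s k <= K)%N.
Proof.
by move=> le_kK; rewrite /next_level; case: (idle s); rewrite ?geq_minr ?(leq_trans (leq_pred k)).
Qed.

Lemma next_level_move (s : 'I_N.+1) (k : nat) (a : bool) :
  move_prob s k a != 0 -> next_level s k != k.
Proof.
rewrite /move_prob /next_level; case: (idle s); case: a; rewrite ?eqxx //=.
  by case: leqP; rewrite ?eqxx // => /minn_idPl -> _; rewrite gtn_eqF.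
by case: (posnP k) => [-> | k_gt0 _]; rewrite ?eqxx // ltn_eqF // ltn_predL.
Qed.

Lemma Qval_qvalue (V : 'I_N.+1 -> 'I_K.+1 -> R) (s : 'I_N.+1) (k : 'I_K.+1) (a : bool) :
  Qval ps b c p q beta V s k a = qvalue (level_value V) s (val k) a.
Proof.
rewrite /Qval /qvalue reward_stage /next_value /level_value; congr (_ + beta * _).
under eq_bigr => s' _ do under eq_bigr => k' _ do rewrite trans_move -mulrA.
rewrite !mulr_sumr -big_split; apply: eq_bigr => s' _ /=.
rewrite -mulr_sumr sum_ord_two_point ?inord_val ?next_level_le ?leq_ord //; first ring.
exact: next_level_move.
Qed.

Lemma level_value_fixpoint (V : 'I_N.+1 -> 'I_K.+1 -> R) :
  bellman ps b c p q beta V ->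
  forall k, (k <= K)%N -> level_value V k = bellman_avg (level_value V) k.
Proof.
move=> V_opt k le_kK; apply: eq_bigr => s _.
by rewrite V_opt /best_value !Qval_qvalue /= inordK.
Qed.

Hypothesis c_gt0 : 0 < c.
Hypothesis p01 : 0 < p < 1.
Hypothesis q01 : 0 < q < 1.
Hypothesis beta01 : 0 < beta < 1.
Hypothesis ps_ge0 : forall s, 0 <= ps s.
Hypothesis ps_sum1 : \sum_s ps s = 1.

Lemma move_prob01 (s : 'I_N.+1) (k : nat) (a : bool) : 0 <= move_prob s k a <= 1.
Proof.
case/andP: p01 => p_gt0 p_lt1; case/andP: q01 => q_gt0 q_lt1.
by rewrite /move_prob; case: ifP => _; case: ifP => _; rewrite ?lexx ?ler01 ?ltW.
Qed.

Lemma qvalue_stay (W : nat -> R) (s : 'I_N.+1) (k : nat) :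
  qvalue W s k (idle s) = beta * W k.
Proof.
by rewrite /qvalue /stage_reward /next_value /move_prob; case: (idle s) => /=; ring.
Qed.

Lemma best_value_advantage (W : nat -> R) (s : 'I_N.+1) (k : nat) :
  best_value W s k = beta * W k + Num.max 0 (advantage W s k).
Proof.
rewrite /best_value /advantage -(qvalue_stay W s k).
by case: (idle s) => /=; rewrite -maxr_shift // maxC.
Qed.

Lemma advantage_idle (W : nat -> R) (s : 'I_N.+1) (k : nat) : idle s ->
  advantage W s k = if (k < K)%N then p * (beta * incr W k.+1 - c) else - (c * p).
Proof.
move=> s_idle; rewrite /advantage /qvalue /stage_reward /next_value /move_prob.
rewrite /next_level s_idle /incr /=.
by case: ltnP => [/minn_idPl -> | _] /=; ring.
Qed.

Lemma advantage_busy (W : nat -> R) (s : 'I_N.+1) (k : nat) : ~~ idle s ->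
  advantage W s k = if (0 < k)%N then q * (b s - beta * incr W k) else 0.
Proof.
move=> /negbTE s_busy; rewrite /advantage /qvalue /stage_reward /next_value /move_prob.
by rewrite /next_level s_busy /incr /=; case: ifP => _ /=; ring.
Qed.

Lemma qvalue_lipschitz (W U : nat -> R) (e : R) (s : 'I_N.+1) (k : nat) (a : bool) :
  (forall j, (j <= K)%N -> `|W j - U j| <= e) -> (k <= K)%N ->
  `|qvalue W s k a - qvalue U s k a| <= beta * e.
Proof.
move=> W_U le_kK; have beta_ge0 : 0 <= beta by case/andP: beta01 => /ltW.
have -> : qvalue W s k a - qvalue U s k a = beta * ((1 - move_prob s k a) *
    (W k - U k) + move_prob s k a * (W (next_level s k) - U (next_level s k))).
  by rewrite /qvalue /next_value; ring.
rewrite normrM ger0_norm // ler_wpM2l //.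
by apply: norm_convex_comb_le; rewrite ?move_prob01 ?W_U ?next_level_le.
Qed.

Lemma bellman_avg_lipschitz (W U : nat -> R) (e : R) (k : nat) :
  (forall j, (j <= K)%N -> `|W j - U j| <= e) -> (k <= K)%N ->
  `|bellman_avg W k - bellman_avg U k| <= beta * e.
Proof.
move=> W_U le_kK; rewrite /bellman_avg -sumrB.
apply: le_trans (ler_norm_sum _ _ _) _.
rewrite -[beta * e]mul1r -ps_sum1 mulr_suml; apply: ler_sum => s _.
rewrite -mulrBr normrM ger0_norm // ler_wpM2l //.
by apply: norm_maxB_le; apply: qvalue_lipschitz.
Qed.

Lemma incr_best_value (W : nat -> R) (s : 'I_N.+1) (k : nat) :
  incr (best_value W s) k =
  beta * incr W k + (Num.max 0 (advantage W s k) - Num.max 0 (advantage W s k.-1)).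
Proof. by rewrite /incr !best_value_advantage; ring. Qed.

Lemma idle_best_value_concave (W : nat -> R) (s : 'I_N.+1) :
  idle s -> concave_on K W -> concave_on K (best_value W s).
Proof.
move=> s_idle W_cc k /andP[k_gt0 lt_kK].
case/andP: p01 => p_gt0 p_lt1; case/andP: beta01 => beta_gt0 _.
have adv_mono j : (0 < j < K)%N ->
    p * (beta * incr W j.+1 - c) <= p * (beta * incr W j - c).
  by move=> hj; rewrite ler_pM2l // lerD2r ler_pM2l // W_cc.
have dW : 0 <= beta * (incr W k - incr W k.+1).
  by rewrite mulr_ge0 ?subr_ge0 ?W_cc ?k_gt0 // ltW.
rewrite !incr_best_value !advantage_idle // lt_kK.
rewrite (leq_ltn_trans (leq_pred k)) // (prednK k_gt0).
set a2 := if _ then _ else _; set a1 := p * (beta * incr W k.+1 - c).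
have top : Num.max 0 a2 <= Num.max 0 a1.
  rewrite /a2; case: ifP => [lt_k1K | _].
    by have /max0B_bounds/andP[+ _] := adv_mono k.+1 lt_k1K; rewrite subr_ge0.
  rewrite max_l; first by rewrite le_max lexx.
  by rewrite oppr_le0 mulr_ge0 // ltW.
have /max0B_bounds/andP[_ bot] : a1 <= p * (beta * incr W k - c).
  by apply: adv_mono; rewrite k_gt0.
rewrite /a1 in top bot *; nra.
Qed.

Lemma busy_best_value_concave (W : nat -> R) (s : 'I_N.+1) :
  ~~ idle s -> concave_on K W -> concave_on K (best_value W s).
Proof.
move=> s_busy W_cc k /andP[k_gt0 lt_kK].
case/andP: q01 => q_gt0 q_lt1; case/andP: beta01 => beta_gt0 _.
have adv_mono j : (0 < j < K)%N ->
    q * (b s - beta * incr W j) <= q * (b s - beta * incr W j.+1).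
  by move=> hj; rewrite ler_pM2l // lerD2l lerN2 ler_pM2l // W_cc.
have dW : 0 <= beta * (incr W k - incr W k.+1).
  by rewrite mulr_ge0 ?subr_ge0 ?W_cc ?k_gt0 // ltW.
rewrite !incr_best_value !advantage_busy // k_gt0 /=.
set a0 := if _ then _ else _; set a1 := q * (b s - beta * incr W k).
have bot : Num.max 0 a0 <= Num.max 0 a1.
  rewrite /a0; case: (posnP k.-1) => [_ | km_gt0]; first by rewrite maxxx le_max lexx.
  have km_lt : (0 < k.-1 < K)%N by rewrite km_gt0 (leq_ltn_trans (leq_pred k)).
  have /max0B_bounds/andP[+ _] := adv_mono k.-1 km_lt.
  by rewrite (prednK k_gt0) subr_ge0.
have /max0B_bounds/andP[_ top] : a1 <= q * (b s - beta * incr W k.+1).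
  by apply: adv_mono; rewrite k_gt0.
rewrite /a1 in top bot *; nra.
Qed.

Lemma bellman_avg_concave (W : nat -> R) :
  concave_on K W -> concave_on K (bellman_avg W).
Proof.
move=> W_cc k k_in; rewrite /incr /bellman_avg -!sumrB; apply: ler_sum => s _.
rewrite -!mulrBr ler_wpM2l //.
by case: (boolP (idle s)) => hs;
  [apply: idle_best_value_concave | apply: busy_best_value_concave].
Qed.

Lemma bellman_fixpoint_concave (W : nat -> R) :
  (forall k, (k <= K)%N -> W k = bellman_avg W k) -> concave_on K W.
Proof.
move=> W_fix; pose U n := iter n bellman_avg (fun=> 0).
apply: (@concave_on_of_approx _ _ _ U (\sum_(j < K.+1) `|W j|) beta).
- by case/andP: beta01 => /ltW -> ->.
- by elim=> [|n IH] /=; [move=> k _; rewrite /incr subrr | exact: bellman_avg_concave].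
elim=> [|n IH] j le_jK /=.
  rewrite subr0 expr0 mulr1 (bigD1 (Ordinal (le_jK : j < K.+1)%N)) //= lerDl.
  exact: sumr_ge0.
by rewrite W_fix // exprS mulrCA; apply: bellman_avg_lipschitz.
Qed.

Lemma pistar_idle (V : 'I_N.+1 -> 'I_K.+1 -> R) (s : 'I_N.+1) (k : 'I_K.+1) :
  idle s -> (val k < K)%N ->
  pistar ps b c p q beta V s k = (beta * incr (level_value V) (val k).+1 < c).
Proof.
move=> s_idle lt_kK; case/andP: p01 => p_gt0 _.
rewrite /pistar s_idle (ltn_eqF lt_kK) /= !Qval_qvalue.
have := advantage_idle (level_value V) (val k) s_idle.
rewrite /advantage s_idle lt_kK /= => adv.
by rewrite -subr_lt0 adv pmulr_rlt0 // subr_lt0.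
Qed.

Lemma pistar_busy (V : 'I_N.+1 -> 'I_K.+1 -> R) (s : 'I_N.+1) (k : 'I_K.+1) :
  ~~ idle s -> (0 < val k)%N ->
  pistar ps b c p q beta V s k = (beta * incr (level_value V) (val k) < b s).
Proof.
move=> s_busy k_gt0; case/andP: q01 => q_gt0 _.
rewrite /pistar s_busy (negbTE s_busy) eqn0Ngt k_gt0 /= !Qval_qvalue.
have := advantage_busy (level_value V) (val k) s_busy.
rewrite /advantage (negbTE s_busy) k_gt0 /= => adv.
by rewrite -subr_gt0 adv pmulr_rgt0 // subr_gt0.
Qed.

Lemma pistar_upclosed (V : 'I_N.+1 -> 'I_K.+1 -> R) (s : 'I_N.+1) :
  concave_on K (level_value V) -> forall i j, (i <= j <= K)%N ->
  pistar ps b c p q beta V s (inord i) -> pistar ps b c p q beta V s (inord j).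
Proof.
move=> W_cc i j /andP[le_ij le_jK]; have le_iK := leq_trans le_ij le_jK.
have val_inord n : (n <= K)%N -> val (inord n : 'I_K.+1) = n by exact: inordK.
have incr_le i' j' : (0 < i')%N -> (i' <= j' <= K)%N ->
    beta * incr (level_value V) j' <= beta * incr (level_value V) i'.
  move=> i'_gt0 le_ij'; apply: ler_wpM2l; last exact: (concave_incr_le W_cc).
  by case/andP: beta01 => /ltW.
case: (boolP (idle s)) => hs.
  case: (ltnP j K) => [lt_jK | le_Kj]; last first.
    have -> : j = K by apply/eqP; rewrite eqn_leq le_jK.
    by move=> _; rewrite /pistar hs /= val_inord ?eqxx.
  rewrite !pistar_idle ?val_inord ?(leq_ltn_trans le_ij) //.
  by apply: le_lt_trans; apply: incr_le; rewrite // ltnS le_ij.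
case: (posnP i) => [-> | i_gt0]; first by rewrite /pistar hs val_inord.
rewrite !pistar_busy ?val_inord ?(leq_trans i_gt0) //.
by apply: le_lt_trans; apply: incr_le; rewrite ?le_ij.
Qed.

End D2DModel.

Theorem proposition1 (R : realType) (N K : nat) (ps : 'I_N.+1 -> R)
  (b : 'I_N.+1 -> R) (c p q beta : R)
  (hps : forall s, 0 < ps s < 1)
  (hsum : \sum_(s : 'I_N.+1) ps s = 1)
  (hb0 : forall s : 'I_N.+1, (0 < val s)%N -> 0 < b s)
  (hbinc : forall s t : 'I_N.+1, (0 < val s)%N -> (val s < val t)%N -> b s < b t)
  (hK : (1 <= K)%N) (hc : 0 < c) (hp : 0 < p < 1) (hq : 0 < q < 1)
  (hbeta : 0 < beta < 1)
  (V : 'I_N.+1 -> 'I_K.+1 -> R)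
  (hV : bellman ps b c p q beta V) :
  forall s : 'I_N.+1, exists Kth : int, forall k : 'I_K.+1,
    pistar ps b c p q beta V s k = (Kth <= (val k)%:Z).
Proof.
move=> s; have ps_ge0 s' : 0 <= ps s' by case/andP: (hps s') => /ltW.
have W_cc : concave_on K (level_value ps V).
  exact: (bellman_fixpoint_concave hc hp hq hbeta ps_ge0 hsum (level_value_fixpoint hV)).
have [Kth Kth_spec] : exists Kth : int, forall k, (k <= K)%N ->
    pistar ps b c p q beta V s (inord k) = (Kth <= k%:Z).
  by apply: upclosed_threshold; apply: pistar_upclosed.
by exists Kth => k; rewrite -Kth_spec ?leq_ord // inord_val.
Qed.
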